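(* For a selection $\mathtt{SEL}$ of the consistent set map, the chasing properties satisfy the implications (C) $\Rightarrow$ (A), (C) $\Rightarrow$ (D), (A) $\Rightarrow$ (B), and (D) $\Rightarrow$ (B); the reverse (and any other) implications between these properties do not hold in general.
   Context: $(\mathbb{T},\mathsf{K},d)$ is a compact parametrization of a set $\mathcal{F}$ of functions $\mathbb{N}\times\mathcal{X}\times\mathcal{U}\to\mathcal{X}$: $(\mathsf{K},d)$ compact metric, $\mathbb{T}:\mathsf{K}\to2^{\mathcal{F}}$, $\mathcal{F}\subseteq\bigcup_\theta\mathbb{T}[\theta]$. For a finite data set $\mathcal{D}$ of points $(t,x^+,x,u)$, $\mathsf{P}(\mathcal{D})$ is the closure of $\{\theta\in\mathsf{K}:\exists f\in\mathbb{T}[\theta],\ x^+=f(t,x,u)\ \forall(t,x^+,x,u)\in\mathcal{D}\}$; $\mathtt{SEL}$ is a selection if $\mathtt{SEL}[\mathcal{D}]\in\mathsf{P}(\mathcal{D})$. A property below holds for $\mathtt{SEL}$ if it holds for every data stream $\mathcal{D}_t=(d_1,\dots,d_t)$ for which some $f\in\mathcal{F}$ is consistent with all $\mathcal{D}_t$, with $\theta_t=\mathtt{SEL}[\mathcal{D}_t]$: (A) $\lim_t\theta_t$ exists; (B) $\lim_t d(\theta_t,\theta_{t-1})=0$; (C) ($\gamma$-competitive, some $\gamma$) $\sum_{t=t_1+1}^{t_2}d(\theta_t,\theta_{t-1})\le\gamma d_H(\mathsf{P}(\mathcal{D}_{t_2}),\mathsf{P}(\mathcal{D}_{t_1}))$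 for all $t_1<t_2$; (D) ($(\gamma,T)$-weakly competitive) the same inequality for all $t_1<t_2$ with $t_2-t_1\le T$. $d_H$ is the Hausdorff distance. *)

From HB Require Import structures.
From mathcomp Require Import all_boot all_order all_algebra.
From mathcomp Require Import all_classical all_reals all_analysis.
From Stdlib Require List.
Set Implicit Arguments. Unset Strict Implicit. Unset Printing Implicit Defensive.
Import Order.TTheory GRing.Theory Num.Theory.
Import numFieldTopology.Exports.
Local Open Scope classical_set_scope.
Local Open Scope ring_scope.

Definition fn (X U : Type) := nat -> X -> U -> X.

Record datum (X U : Type) := Datum { d_t : nat; d_xp : X; d_x : X; d_u : U }.

Definition consistent (X U : Type) (f : fn X U) (D : seq (datum X U)) : Prop :=
  List.Forall (fun d => d_xp d = f (d_t d) (d_x d) (d_u d)) D.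

Definition compact_param (R : realType) (X U : Type) (K : metricType R)
  (F : set (fn X U)) (T : K -> set (fn X U)) : Prop :=
  compact [set: K] /\ F `<=` \bigcup_(th in [set: K]) T th.

Definition Pset (R : realType) (X U : Type) (K : metricType R)
  (T : K -> set (fn X U)) (D : seq (datum X U)) : set K :=
  closure [set th | exists2 f, T th f & consistent f D].

Definition is_selection (R : realType) (X U : Type) (K : metricType R)
  (T : K -> set (fn X U)) (SEL : seq (datum X U) -> K) : Prop :=
  forall D, Pset T D !=set0 -> Pset T D (SEL D).

Definition dist_to_set (R : realType) (K : metricType R) (x : K) (B : set K) : R :=
  inf [set mdist x b | b in B].
Definition hdist (R : realType) (K : metricType R) (A B : set K) : R :=
  Num.max (sup [set dist_to_set a B | a in A]) (sup [set dist_to_set b A | b in B]).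

(* data stream d_1, d_2, ... is represented by d : nat -> datum (d_{i+1} = d i);
   D_t = (d_1,...,d_t) = mkseq d t; admissible: some f in F consistent with all D_t *)
Definition admissible (X U : Type) (F : set (fn X U)) (d : nat -> datum X U) : Prop :=
  exists2 f, F f & forall t, consistent f (mkseq d t).

Definition theta (X U : Type) (K : Type) (SEL : seq (datum X U) -> K)
  (d : nat -> datum X U) (t : nat) : K := SEL (mkseq d t).

Definition propA (R : realType) (X U : Type) (K : metricType R)
  (F : set (fn X U)) (T : K -> set (fn X U)) (SEL : seq (datum X U) -> K) : Prop :=
  forall d, admissible F d -> exists l : K, theta SEL d @ \oo --> l.

Definition propB (R : realType) (X U : Type) (K : metricType R)
  (F : set (fn X U)) (T : K -> set (fn X U)) (SEL : seq (datum X U) -> K) : Prop :=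
  forall d, admissible F d ->
    (fun t => mdist (theta SEL d t.+1) (theta SEL d t)) @ \oo --> (0 : R).

Definition competitive_ineq (R : realType) (X U : Type) (K : metricType R)
  (T : K -> set (fn X U)) (SEL : seq (datum X U) -> K) (d : nat -> datum X U)
  (gamma : R) (t1 t2 : nat) : Prop :=
  \sum_(t1 <= t < t2) mdist (theta SEL d t.+1) (theta SEL d t)
    <= gamma * hdist (Pset T (mkseq d t2)) (Pset T (mkseq d t1)).

Definition propC (R : realType) (X U : Type) (K : metricType R)
  (F : set (fn X U)) (T : K -> set (fn X U)) (SEL : seq (datum X U) -> K) : Prop :=
  exists gamma : R, 0 <= gamma /\
    forall d, admissible F d -> forall t1 t2 : nat, (t1 < t2)%N ->
      competitive_ineq T SEL d gamma t1 t2.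

Definition propD (R : realType) (X U : Type) (K : metricType R)
  (F : set (fn X U)) (T : K -> set (fn X U)) (SEL : seq (datum X U) -> K) : Prop :=
  exists (gamma : R) (Tw : nat), 0 <= gamma /\ (0 < Tw)%N /\
    forall d, admissible F d -> forall t1 t2 : nat, (t1 < t2)%N -> (t2 - t1 <= Tw)%N ->
      competitive_ineq T SEL d gamma t1 t2.

Definition not_implies (R : realType)
  (Px Py : forall (X U : Type) (K : metricType R),
     set (fn X U) -> (K -> set (fn X U)) -> (seq (datum X U) -> K) -> Prop) : Prop :=
  exists (X U : Type) (K : metricType R) (F : set (fn X U)) (T : K -> set (fn X U))
         (SEL : seq (datum X U) -> K),
    compact_param F T /\ is_selection T SEL /\ Px X U K F T SEL /\ ~ Py X U K F T SEL.

From HB Require Import structures.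
From mathcomp Require Import all_boot all_order all_algebra.
From mathcomp Require Import all_classical all_reals all_analysis.
From mathcomp Require Import ring lra zify.
Set Implicit Arguments. Unset Strict Implicit. Unset Printing Implicit Defensive.
Import Order.TTheory GRing.Theory Num.Theory.
Import numFieldTopology.Exports.
Local Open Scope classical_set_scope.
Local Open Scope ring_scope.

(* Under (C) the total variation of the selections is at most
   gamma times the diameter of the compact set K, so every later displacement
   is bounded by a tail of a convergent series and the selections converge to
   their cluster point.  Under (D) with t2 = t1 + 1, each step is at most gamma
   d_H(P(D_(t+1)), P(D_t)), and for a nested sequence of compact sets these
   Hausdorff distances tend to 0 because eventually every point of P(D_t) is
   close to the intersection of all of them.

   Both counterexamples live in K = [0,1] x (N u {oo}).  In the first, every
   function is consistent with every data set, so P(D) = K and all Hausdorff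
   distances vanish, while the selection jumps once: (A) holds, (C) and (D)
   fail.  In the second, the system indexed by n in N outputs 1 exactly at time
   n, so observing output 0 at a new time n removes the point n, which lies at
   distance 1/(n+1) from everything else, and d_H(P(D_(t+1)), P(D_t)) =
   1/(n+1).  Selecting (wave(sum of the removed weights), oo) with the
   (pi/2)-Lipschitz wave x = (1 - cos(pi x))/2 is (pi/2, 1)-weakly competitive,
   but for data at times 0, 1, 2, ... the first coordinate is the wave of the
   harmonic sums, which keeps oscillating between 0 and 1. *)

Section sup_real.
Context {R : realType}.
Implicit Types E : set R.

Lemma sup_ge0 E : (forall x, E x -> 0 <= x) -> 0 <= sup E.
Proof.
move=> E0; have [supE|/sup_out ->//] := pselect (has_sup E).
have [[x Ex] _] := supE; exact: le_trans (E0 _ Ex) (sup_upper_bound supE Ex).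
Qed.

Lemma sup_le_nneg E M : 0 <= M -> (forall x, E x -> x <= M) -> sup E <= M.
Proof.
move=> M0 EM; have [->|/set0P E0] := eqVneq E set0; first by rewrite sup0.
exact: ge_sup.
Qed.

End sup_real.

Section hausdorff_distance.
Context {R : realType} {K : metricType R}.
Implicit Types (A B : set K) (x : K).

Lemma dist_to_set_ge0 x B : 0 <= dist_to_set x B.
Proof.
rewrite /dist_to_set; have [->|/set0P [b Bb]] := eqVneq B set0.
  by rewrite image_set0 inf0.
apply: lb_le_inf; first by exists (mdist x b), b.
by move=> _ [c _ <-]; apply: mdist_ge0.
Qed.

Lemma dist_to_set_le x B b : B b -> dist_to_set x B <= mdist x b.
Proof.
move=> Bb; apply: ge_inf; last by exists b.
by exists 0 => _ [c _ <-]; apply: mdist_ge0.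
Qed.

Lemma dist_to_set_eq0 x B : B x -> dist_to_set x B = 0.
Proof.
move=> Bx; apply/eqP; rewrite eq_le dist_to_set_ge0 andbT.
by have := dist_to_set_le x Bx; rewrite mdistxx.
Qed.

Lemma dist_to_set_ge x B r :
  B !=set0 -> (forall b, B b -> r <= mdist x b) -> r <= dist_to_set x B.
Proof.
move=> [b Bb] rB; apply: lb_le_inf; first by exists (mdist x b), b.
by move=> _ [c Bc <-]; apply: rB.
Qed.

Lemma dist_to_set_le_diam x B M :
  0 <= M -> (forall a b : K, mdist a b <= M) -> dist_to_set x B <= M.
Proof.
move=> M0 diamM; have [->|/set0P [b Bb]] := eqVneq B set0.
  by rewrite /dist_to_set image_set0 inf0.
exact: le_trans (dist_to_set_le x Bb) (diamM _ _).
Qed.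

Lemma hdist_ge0 A B : 0 <= hdist A B.
Proof.
rewrite /hdist le_max; apply/orP; left.
by apply: sup_ge0 => _ [a _ <-]; apply: dist_to_set_ge0.
Qed.

Lemma hdist_le A B e : 0 <= e ->
  (forall a, A a -> dist_to_set a B <= e) ->
  (forall b, B b -> dist_to_set b A <= e) -> hdist A B <= e.
Proof.
move=> e0 AB BA; rewrite /hdist ge_max.
by apply/andP; split; apply: sup_le_nneg => // _ [c ? <-]; [apply: AB | apply: BA].
Qed.

Lemma hdist_le_diam A B M :
  0 <= M -> (forall a b : K, mdist a b <= M) -> hdist A B <= M.
Proof. by move=> M0 diamM; apply: hdist_le => // *; apply: dist_to_set_le_diam. Qed.

Lemma le_hdist A B M y r : (forall a b : K, mdist a b <= M) ->
  B y -> r <= dist_to_set y A -> r <= hdist A B.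
Proof.
move=> diamM By ry; rewrite /hdist le_max; apply/orP; right.
apply: le_trans ry (sup_upper_bound _ _); last by exists y.
split; first by exists (dist_to_set y A), y.
exists (Num.max M 0) => _ [c _ <-].
by apply: dist_to_set_le_diam => [|a' b']; rewrite le_max ?lexx ?orbT ?diamM.
Qed.

Lemma closure_mdist_ge x (S : set K) r :
  (forall s, S s -> r <= mdist x s) -> forall p, closure S p -> r <= mdist x p.
Proof.
move=> rS p Sp; rewrite leNgt; apply/negP => pr.
have gap : 0 < r - mdist x p by rewrite subr_gt0.
have [s [Ss]] := Sp _ (nbhsx_ballx p _ gap).
rewrite ballEmdist /= => ps; have := rS _ Ss; rewrite leNgt => /negP; apply.
by apply: le_lt_trans (metric_triangle x p s) _; rewrite -ltrBrDl.
Qed.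

End hausdorff_distance.

Section compact_metric.
Context {R : realType} {K : metricType R}.

Lemma continuous_mdist (x0 : K) : continuous (mdist x0).
Proof.
move=> x; apply/cvgrPdist_lt => e e0.
apply: filterS (nbhsx_ballx x _ e0) => y; rewrite ballEmdist /= => xy.
have := metric_triangle x0 x y; have := metric_triangle x0 y x.
have := metric_sym x y; rewrite ltr_norml => *; apply/andP; split; lra.
Qed.

Lemma compact_mdist_bounded (x0 : K) : compact [set: K] ->
  exists2 M, 0 <= M & forall a b : K, mdist a b <= M.
Proof.
move=> cK; have [||c _ cmax] := @compact_EVT_max K R (mdist x0) setT _ cK.
- by exists x0.
- exact/continuous_subspaceT/continuous_mdist.
exists (mdist x0 c *+ 2); first by rewrite mulrn_wge0 // mdist_ge0.
move=> a b; have := metric_triangle a x0 b; have := metric_sym a x0.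
have := cmax a (in_setT _); have := cmax b (in_setT _); rewrite mulr2n /=; lra.
Qed.

End compact_metric.

Section metric_sequences.
Context {R : realType} {K : metricType R} (u : nat -> K).

Lemma cvg_mdist_succ0 (l : K) :
  u @ \oo --> l -> (fun t => mdist (u t.+1) (u t)) @ \oo --> 0.
Proof.
move=> ul; apply/cvgrPdist_lt => e e0.
have [N _ ulN] := metricType_numDomainType.cvgr_dist_lt ul (divr_gt0 e0 (ltr0n _ 2)).
exists N => // t /= Nt; rewrite sub0r normrN ger0_norm ?mdist_ge0 //.
have := ulN t Nt; have := ulN t.+1 (leqW Nt).
have := metric_triangle (u t.+1) l (u t); have := metric_sym l (u t.+1) => /=; lra.
Qed.

Lemma mdist_le_sum_steps n m : (n <= m)%N ->
  mdist (u n) (u m) <= \sum_(n <= t < m) mdist (u t.+1) (u t).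
Proof.
move=> /subnKC <-; elim: (m - n)%N => [|k IH]; first by rewrite addn0 mdistxx big_geq.
rewrite addnS big_nat_recr ?leq_addr //=.
apply: le_trans (metric_triangle _ (u (n + k)) _) _.
by rewrite lerD // metric_sym.
Qed.

Lemma compact_bounded_steps_cvg : compact [set: K] ->
  has_ubound (range (fun n => \sum_(0 <= t < n) mdist (u t.+1) (u t))) ->
  exists l : K, u @ \oo --> l.
Proof.
set v := fun n => _; move=> cK vbound.
have v_nd : {homo v : n m / (n <= m)%N >-> n <= m}.
  move=> n m nm; rewrite /v (big_cat_nat _ nm) //= lerDl.
  by apply: sumr_ge0 => t _; apply: mdist_ge0.
have v_cvg : cvgn v by apply: nondecreasing_is_cvgn.
have v_tail n m : (n <= m)%N -> mdist (u n) (u m) <= limn v - v n.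
  move=> nm; apply: le_trans (mdist_le_sum_steps nm) _.
  rewrite lerBrDl /v -big_cat_nat //=; exact: nondecreasing_cvgn_le.
have [x [_ clx]] := cK (u @ \oo) _ filterT.
exists x; apply/metricType_numDomainType.cvgrPdist_lt => e e0.
have e4 : 0 < e / 4 by rewrite divr_gt0.
have [N _ vN] := cvgr_dist_lt _ _ v_cvg _ e4.
have [_ [[m Nm <-] xm]] : (u @` [set m | (N <= m)%N]) `&` ball x (e / 2) !=set0.
  by apply: clx; [exists N => // m; exists m | apply: nbhsx_ballx; rewrite divr_gt0].
rewrite ballEmdist /= in xm.
exists N => // t /= Nt.
have vNe : limn v - v N < e / 4 by apply: le_lt_trans (ler_norm _) (vN N (leqnn N)).
have xt := metric_triangle x (u m) (u t); have mt := metric_triangle (u m) (u N) (u t).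
have := v_tail _ _ Nm; have := v_tail _ _ Nt; rewrite [mdist (u N) (u m)]metric_sym.
lra.
Qed.

End metric_sequences.

Section nested_compact.
Context {R : realType} {K : metricType R} (P : nat -> set K).
Hypotheses (cK : compact [set: K]) (P_closed : forall n, closed (P n))
  (P_nested : forall n m, (n <= m)%N -> P m `<=` P n).

Lemma nested_compact_near_cap e : 0 < e -> exists N, forall b, P N b ->
  exists2 q, (forall n, P n q) & mdist b q < e.
Proof.
move=> e0; apply: contrapT => /forallNP farN.
pose C n := [set b | P n b /\ forall q, (forall s, P s q) -> e <= mdist b q].
have C_nested n m : (n <= m)%N -> C m `<=` C n.
  by move=> nm b [Pb farb]; split=> //; apply: P_nested Pb.
have C_proper n : C n !=set0.
  have /existsNP [b /not_implyP [Pb farb]] := farN n; exists b; split=> // q Pq.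
  by rewrite leNgt; apply/negP => bq; apply: farb; exists q.
have CF : ProperFilter (filter_from [set: nat] C).
  apply: filter_from_proper => [|n _]; last exact: C_proper.
  apply: filter_from_filter; first by exists 0%N.
  move=> n m _ _; exists (maxn n m) => // b Cb.
  by split; [apply: C_nested Cb; rewrite leq_maxl | apply: C_nested Cb; rewrite leq_maxr].
have [p [_ clp]] := cK CF filterT.
have Pp n : P n p.
  apply: P_closed => B Bp.
  have [b [[Pb _] Bb]] := clp (C n) B (ex_intro2 _ _ n I (@subset_refl _ _)) Bp.
  by exists b.
have [b [[_ farb] pb]] := clp (C 0%N) (ball p e)
  (ex_intro2 _ _ 0%N I (@subset_refl _ _)) (nbhsx_ballx p _ e0).
by move: pb; rewrite ballEmdist /= metric_sym ltNge farb.
Qed.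

Lemma nested_compact_hdist_cvg0 : (fun t => hdist (P t.+1) (P t)) @ \oo --> 0.
Proof.
apply/cvgrPdist_lt => e e0; have e2 : 0 < e / 2 by rewrite divr_gt0.
have [N nearN] := nested_compact_near_cap e2.
exists N => // t /= Nt; rewrite sub0r normrN ger0_norm ?hdist_ge0 //.
apply: (@le_lt_trans _ _ (e / 2)); last by lra.
apply: hdist_le => [|a Pa|b Pb]; first exact: ltW.
  by rewrite dist_to_set_eq0; [exact: ltW | exact: P_nested (leqnSn t) _ Pa].
have [q Pq bq] := nearN b (P_nested Nt Pb).
exact: le_trans (dist_to_set_le _ (Pq t.+1)) (ltW bq).
Qed.

End nested_compact.

Lemma consistent_mkseqP (X U : Type) (f : fn X U) (d : nat -> datum X U) t :
  consistent f (mkseq d t) <->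
  forall i, (i < t)%N -> d_xp (d i) = f (d_t (d i)) (d_x (d i)) (d_u (d i)).
Proof.
elim: t => [|t IH]; first by split=> // _; constructor.
rewrite /consistent mkseqS -cats1 List.Forall_app -/(consistent f _) IH.
split=> [[fd /List.Forall_cons_iff [fdt _]] i|fd].
  by rewrite ltnS leq_eqVlt => /orP[/eqP->//|]; apply: fd.
by split=> [i /ltnW|]; [apply: fd | constructor; [apply: fd|]].
Qed.

Section chasing_implications.
Context {R : realType} {X U : Type} {K : metricType R} (F : set (fn X U))
  (T : K -> set (fn X U)) (SEL : seq (datum X U) -> K).

Lemma Pset_mkseq_nested d t s : (t <= s)%N ->
  Pset T (mkseq d s) `<=` Pset T (mkseq d t).
Proof.
move=> ts; apply: closureS => th [f Tf /consistent_mkseqP fd]; exists f => //.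
by apply/consistent_mkseqP => i it; apply: fd; apply: leq_trans ts.
Qed.

Lemma propC_propD : propC F T SEL -> propD F T SEL.
Proof.
move=> [g [g0 Cg]]; exists g, 1%N; do 2!split=> //.
by move=> d ad t1 t2 t12 _; apply: Cg.
Qed.

Lemma propA_propB : propA F T SEL -> propB F T SEL.
Proof. by move=> Aprop d /Aprop [l]; apply: cvg_mdist_succ0. Qed.

Lemma propC_propA : compact_param F T -> propC F T SEL -> propA F T SEL.
Proof.
move=> [cK _] [g [g0 Cg]] d ad.
have [M M0 diamM] := compact_mdist_bounded (theta SEL d 0) cK.
apply: compact_bounded_steps_cvg cK _; exists (g * M) => _ [[|n] _ <-].
  by rewrite big_geq // mulr_ge0.
apply: le_trans (Cg d ad 0%N n.+1 isT) _.
by rewrite ler_wpM2l // hdist_le_diam.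
Qed.

Lemma propD_propB : compact_param F T -> propD F T SEL -> propB F T SEL.
Proof.
move=> [cK _] [g [Tw [g0 [Tw0 Dg]]]] d ad.
have hdist_cvg0 := nested_compact_hdist_cvg0 cK (fun t => @closed_closure _ _)
  (fun t s => @Pset_mkseq_nested d t s).
apply: (@squeeze_cvgr _ _ _ _ (cst 0) (fun t => g * hdist _ _)); last first.
- by rewrite -[X in _ --> X](mulr0 g); exact: cvgMr hdist_cvg0.
- exact: cvg_cst.
- near=> t; rewrite mdist_ge0 /=.
  by have := Dg d ad t t.+1 (ltnSn t); rewrite subSnn /competitive_ineq big_nat1; apply.
Unshelve. all: end_near. Qed.

End chasing_implications.

Section param_space.
Variable R : realType.

(* [option nat] models N u {oo} with [None] = oo: [Some n] is at distance at
   least 1/(n+1) from every other point, and [Some n] tends to [None]. *)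
Definition onat_weight (h : option nat) : R :=
  if h is Some n then n.+1%:R^-1 else 0.

Definition onat_dist (h h' : option nat) : R :=
  if h == h' then 0 else Num.max (onat_weight h) (onat_weight h').

Lemma onat_weight_ge0 h : 0 <= onat_weight h.
Proof. by case: h => //= n; rewrite invr_ge0. Qed.

Lemma onat_dist_le_max h h' : onat_dist h h' <= Num.max (onat_weight h) (onat_weight h').
Proof. by rewrite /onat_dist; case: ifP => // _; rewrite le_max onat_weight_ge0. Qed.

Lemma onat_dist_ge0 h h' : 0 <= onat_dist h h'.
Proof. by rewrite /onat_dist; case: ifP => // _; rewrite le_max onat_weight_ge0. Qed.

Lemma onat_distC h h' : onat_dist h h' = onat_dist h' h.
Proof. by rewrite /onat_dist eq_sym maxC. Qed.

Lemma onat_dist_eq0 h h' : onat_dist h h' = 0 -> h = h'.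
Proof.
rewrite /onat_dist; case: eqP => // _ /eqP.
have wpos n : 0 < onat_weight (Some n) by rewrite /= invr_gt0.
by case: h h' => [n|] [m|] //=; rewrite eq_le ge_max ?le_max !leNgt ?wpos ?andbF.
Qed.

Lemma onat_dist_triangle h1 h2 h3 :
  onat_dist h1 h3 <= onat_dist h1 h2 + onat_dist h2 h3.
Proof.
case: (eqVneq h1 h2) => [<-|ne12]; first by rewrite {2}/onat_dist eqxx add0r.
case: (eqVneq h2 h3) => [<-|ne23]; first by rewrite {3}/onat_dist eqxx addr0.
apply: le_trans (onat_dist_le_max _ _) _.
rewrite /onat_dist (negbTE ne12) (negbTE ne23).
have w1 := onat_weight_ge0 h1; have w2 := onat_weight_ge0 h2.
have le12 : onat_weight h1 <= Num.max (onat_weight h1) (onat_weight h2).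
  by rewrite le_max lexx.
have le23 : onat_weight h3 <= Num.max (onat_weight h2) (onat_weight h3).
  by rewrite le_max lexx orbT.
have ge12 : 0 <= Num.max (onat_weight h1) (onat_weight h2) by rewrite le_max w1.
have ge23 : 0 <= Num.max (onat_weight h2) (onat_weight h3) by rewrite le_max w2.
by rewrite ge_max; apply/andP; split; lra.
Qed.

Definition param_space := {p : R * option nat | 0 <= p.1 <= 1}.
HB.instance Definition _ := Choice.on param_space.

Definition param_dist (p q : param_space) : R :=
  `|(sval p).1 - (sval q).1| + onat_dist (sval p).2 (sval q).2.

Lemma param_distxx p : param_dist p p = 0.
Proof. by rewrite /param_dist subrr normr0 add0r /onat_dist eqxx. Qed.

Lemma param_distC p q : param_dist p q = param_dist q p.
Proof. by rewrite /param_dist distrC onat_distC. Qed.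

Lemma param_dist_eq0 p q : param_dist p q = 0 -> p = q.
Proof.
move=> /eqP; rewrite paddr_eq0 ?normr_ge0 ?onat_dist_ge0 // => /andP[/eqP + /eqP].
move=> /normr0_eq0 /eqP; rewrite subr_eq0 => /eqP r_eq /onat_dist_eq0 h_eq.
by apply: val_inj; move: r_eq h_eq; case: p q => [[x h] ?] [[y k] ?] /= -> ->.
Qed.

Lemma param_dist_triangle q p r : param_dist p r <= param_dist p q + param_dist q r.
Proof. by rewrite /param_dist addrACA lerD ?ler_distD ?onat_dist_triangle. Qed.

HB.instance Definition _ := @isMetric.Build R param_space param_dist
  param_distxx param_dist_eq0 param_distC param_dist_triangle.

Lemma param_mdistE p q : mdist p q = param_dist p q.
Proof. by []. Qed.

Lemma cvg_param_fst (u : nat -> param_space) (l : param_space) :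
  u @ \oo --> l -> (fun t => (sval (u t)).1) @ \oo --> (sval l).1.
Proof.
move=> ul; apply/cvgrPdist_lt => e e0.
apply: filterS (metricType_numDomainType.cvgr_dist_lt ul e0) => t.
by apply: le_lt_trans; rewrite param_mdistE /param_dist lerDl onat_dist_ge0.
Qed.

Definition clamp01 (r : R) : R := if r < 0 then 0 else if 1 < r then 1 else r.

Lemma clamp01_itv r : 0 <= clamp01 r <= 1.
Proof. by rewrite /clamp01; case: ltP => r0; [|case: ltP]; lra. Qed.

Lemma clamp01_id r : 0 <= r <= 1 -> clamp01 r = r.
Proof. by move=> /andP[r0 r1]; rewrite /clamp01 ltNge r0 /= ltNge r1. Qed.

Lemma clamp01_lipschitz a b : `|clamp01 a - clamp01 b| <= `|a - b|.
Proof.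
have := ler_norm (a - b); have : b - a <= `|a - b| by rewrite distrC ler_norm.
rewrite ler_norml /clamp01; case: (ltP a 0); case: (ltP b 0);
  case: (ltP 1 a); case: (ltP 1 b) => /= *; apply/andP; split; lra.
Qed.

Definition mkparam (r : R) (h : option nat) : param_space :=
  exist (fun p : R * option nat => 0 <= p.1 <= 1) (clamp01 r, h) (clamp01_itv r).

End param_space.

Definition first_true (c : nat -> bool) : option nat :=
  if pselect (exists n, c n) is left cex then Some (ex_minn cex) else None.

Lemma first_true_Some c n :
  first_true c = Some n -> c n /\ forall i, (i < n)%N -> ~~ c i.
Proof.
rewrite /first_true; case: pselect => // cex [<-]; case: ex_minnP => m cm mmin.
by split=> // i im; apply/negP => /mmin; rewrite leqNgt im.
Qed.

Lemma first_true_None c : first_true c = None -> forall i, ~~ c i.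
Proof.
by rewrite /first_true; case: pselect => // nc _ i; apply/negP => ci; apply: nc; exists i.
Qed.

Lemma first_trueE (c : nat -> bool) n :
  c n -> (forall i, (i < n)%N -> ~~ c i) -> first_true c = Some n.
Proof.
move=> cn cbefore; case E: (first_true c) => [m|]; last first.
  by have := first_true_None E n; rewrite cn.
have [cm mbefore] := first_true_Some E; congr Some.
by case: (ltngtP m n) => // [/cbefore|/mbefore]; rewrite ?cm ?cn.
Qed.

Section param_space_compact.
Variable R : realType.
Local Notation param_space := (param_space R).

Lemma first_true_weight_le (c : nat -> bool) M :
  (forall i, (i <= M)%N -> ~~ c i) -> onat_weight R (first_true c) <= M.+2%:R^-1.
Proof.
move=> cM; case E: (first_true c) => [n|] /=; last by rewrite invr_ge0.
have [cn _] := first_true_Some E.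
have Mn : (M < n)%N by rewrite ltnNge; apply/negP => /cM; rewrite cn.
by rewrite lef_pV2 ?posrE ?ltr0n // ler_nat.
Qed.

Lemma first_true_dist_le (c c2 : nat -> bool) M :
  (forall i, (i <= M)%N -> c2 i = c i) ->
  onat_dist R (first_true c) (first_true c2) <= M.+2%:R^-1.
Proof.
move=> cc2; have [cM|] := pselect (forall i, (i <= M)%N -> ~~ c i).
  apply: le_trans (onat_dist_le_max R _ _) _; rewrite ge_max first_true_weight_le //=.
  by apply: first_true_weight_le => i iM; rewrite cc2 // cM.
move=> /existsNP [i /not_implyP [iM /negP]]; rewrite negbK => ci.
case E: (first_true c) => [n|]; last by have := first_true_None E i; rewrite ci.
have [cn nfirst] := first_true_Some E.
have nM : (n <= M)%N.
  by apply: leq_trans iM; rewrite leqNgt; apply/negP => /nfirst; rewrite ci.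
rewrite (@first_trueE c2 n) ?cc2 //; first by rewrite /onat_dist eqxx.
by move=> j jn; rewrite cc2 ?nfirst // (leq_trans (ltnW jn)).
Qed.

(* [param_space] is the continuous image of [0,1] x Cantor space: a bit
   sequence is sent to the index of its first [true]. *)
Definition param_of (z : R * cantor_space) : param_space :=
  mkparam z.1 (first_true z.2).

Lemma nbhs_cantor_prefix (c : cantor_space) M :
  nbhs c [set c2 : cantor_space | forall i, (i <= M)%N -> c2 i = c i].
Proof.
have nbhs_coord i : nbhs c [set c2 : cantor_space | c2 i = c i].
  exact: (@proj_continuous nat (fun=> bool) i c [set c i] (discrete_set1 (c i))).
elim: M => [|M IH].
  by apply: filterS (nbhs_coord 0%N) => c2 c0 i; rewrite leqn0 => /eqP ->.
apply: filterS (filterI IH (nbhs_coord M.+1)) => c2 [cM cSM] i.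
by rewrite leq_eqVlt => /orP[/eqP->//|]; rewrite ltnS; apply: cM.
Qed.

Lemma continuous_param_of : continuous param_of.
Proof.
move=> [r c]; apply/metricType_numDomainType.cvgrPdist_lt => e e0.
have e2 : 0 < e / 2 by rewrite divr_gt0.
pose M := Num.trunc (2 / e).
have M_small : M.+2%:R^-1 < e / 2.
  rewrite -[e / 2]invf_div ltf_pV2 ?posrE ?ltr0n ?divr_gt0 //.
  by apply: lt_le_trans (truncnS_gt (2 / e)) _; rewrite ler_nat.
exists (ball r (e / 2), [set c2 : cantor_space | forall i, (i <= M)%N -> c2 i = c i]).
  by split; [apply: nbhsx_ballx | apply: nbhs_cantor_prefix].
move=> [r2 c2] [/= rr2 /first_true_dist_le cc2].
rewrite param_mdistE /param_dist /=; rewrite /ball /= in rr2.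
apply: le_lt_trans (lerD (clamp01_lipschitz r r2) cc2) _.
by rewrite [X in _ < X]splitr ltrD // (lt_trans _ M_small).
Qed.

Lemma param_space_compact : compact [set: param_space].
Proof.
have : compact (param_of @` (`[0, 1]%classic `*` [set: cantor_space])).
  apply: continuous_compact; first exact: continuous_subspaceT continuous_param_of.
  by apply: compact_setX; [exact: segment_compact | exact: cantor_space_compact].
congr compact; apply/seteqP; split=> // -[[x h] x01] _.
exists (x, if h is Some n then (fun i => i == n) else (fun _ => false)).
  by split=> //=; rewrite in_itv.
apply: val_inj; rewrite /= clamp01_id //; congr pair.
case: h {x01} => [n|]; first by rewrite (@first_trueE _ n) ?eqxx // => i /ltn_eqF ->.
by case E: first_true => [m|] //; have [] := first_true_Some E.
Qed.

End param_space_compact.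

Section oscillation.
Variable R : realType.

Lemma cos_lipschitz (a b : R) : `|cos a - cos b| <= `|a - b|.
Proof.
wlog ab : a b / a < b.
  move=> wlog_ab; case: (ltgtP a b) => [|ba|->]; [exact: wlog_ab| |by rewrite !subrr normr0].
  by rewrite distrC [X in _ <= X]distrC; apply: wlog_ab.
rewrite distrC; have [c _ ->] := @MVT R cos (fun x => - sin x) a b ab
  (fun x _ => is_derive_cos x) (continuous_subspaceT (@continuous_cos R)).
by rewrite normrM normrN [X in _ <= X]distrC ler_piMl // sin_max.
Qed.

Definition wave (x : R) : R := (1 - cos (pi * x)) / 2.

Lemma wave_lipschitz x y : `|wave x - wave y| <= pi / 2 * `|x - y|.
Proof.
have -> : wave x - wave y = (cos (pi * y) - cos (pi * x)) / 2 by rewrite /wave; field.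
rewrite normrM (ger0_norm (_ : 0 <= 2^-1)) ?invr_ge0 // mulrAC ler_wpM2r ?invr_ge0 //.
have := cos_lipschitz (pi * y) (pi * x).
by rewrite -mulrBr normrM (ger0_norm (@pi_ge0 R)) [X in _ <= _ * X]distrC.
Qed.

Lemma wave_nat k : wave k%:R = (odd k)%:R.
Proof.
have cos_pi_nat : cos (pi * k%:R) = (-1) ^+ k :> R.
  elim: k => [|k IH]; first by rewrite mulr0 cos0.
  by rewrite -addn1 natrD mulrDr mulr1 cosDpi IH exprD expr1 mulrN1.
by rewrite /wave cos_pi_nat -signr_odd; case: (odd k) => /=; field.
Qed.

Lemma wave_itv x : 0 <= wave x <= 1.
Proof. by rewrite /wave; have := cos_geN1 (pi * x); have := cos_le1 (pi * x); lra. Qed.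

Definition Hsum (t : nat) : R := series (@harmonic R) t.

Lemma HsumS t : Hsum t.+1 = Hsum t + t.+1%:R^-1.
Proof. by rewrite /Hsum seriesSr. Qed.

Lemma Hsum_nondecreasing : nondecreasing_seq Hsum.
Proof. by apply/nondecreasing_seqP => n; rewrite HsumS lerDl invr_ge0. Qed.

Lemma Hsum_le_nat t : Hsum t <= t%:R.
Proof.
elim: t => [|t IH]; first by rewrite /Hsum /series /= big_geq.
by rewrite HsumS -[X in _ <= X]natr1 lerD // invf_le1 // ler1n.
Qed.

Lemma Hsum_unbounded (k : R) : exists t, k <= Hsum t.
Proof.
apply: contrapT => /forallNP Hk; apply: (@dvg_harmonic R).
apply: nondecreasing_is_cvgn; first exact: Hsum_nondecreasing.
by exists k => _ [n _ <-]; rewrite leNgt; apply/negP => /ltW; apply: Hk.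
Qed.

Lemma Hsum_near_nat (k : nat) : (0 < k)%N ->
  exists2 t, (k <= t)%N & `|Hsum t - k%:R| <= k%:R^-1.
Proof.
move=> k0; have [[|t] Hk Hmin] := ex_minnP (Hsum_unbounded k%:R).
  by move: Hk; rewrite /Hsum /series /= big_geq // lern0 => /eqP k0'; rewrite k0' in k0.
have Ht : Hsum t < k%:R by rewrite ltNge; apply/negP => /Hmin; rewrite ltnn.
have kt : (k <= t.+1)%N by rewrite -(ler_nat R); apply: le_trans Hk (Hsum_le_nat _).
exists t.+1 => //; move: Hk; rewrite HsumS => Hk.
have : t.+1%:R^-1 <= k%:R^-1 :> R by rewrite lef_pV2 ?posrE ?ltr0n // ler_nat.
have : 0 <= k%:R^-1 :> R by rewrite invr_ge0.
rewrite ler_norml => k_ge0 tk; apply/andP; split.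
  by apply: (@le_trans _ _ 0); [rewrite oppr_le0 | rewrite subr_ge0].
by rewrite lerBlDr addrC lerD // ltW.
Qed.

Lemma wave_Hsum_near_parity k : (16 <= k)%N ->
  exists2 t, (k <= t)%N & `|wave (Hsum t) - (odd k)%:R| <= 8^-1.
Proof.
move=> k16; have k0 : (0 < k)%N := leq_ltn_trans (leq0n 15) k16.
have [t kt Htk] := Hsum_near_nat k0.
exists t => //; rewrite -wave_nat; apply: le_trans (wave_lipschitz _ _) _.
have pi2 : pi / 2 <= 2 :> R by have /andP[_ ->] := (@pihalf_02_cos_pihalf R).1.
have k16R : k%:R^-1 <= 16^-1 :> R.
  by rewrite lef_pV2 ?posrE ?ltr0n //; have := k16; rewrite -(ler_nat R).
apply: le_trans (ler_pM _ (normr_ge0 _) pi2 (le_trans Htk k16R)) _.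
  by rewrite divr_ge0 // pi_ge0.
by rewrite (_ : 2 * 16^-1 = 8^-1) //; field.
Qed.

Lemma wave_Hsum_not_cvg : ~ exists l : R, (fun t => wave (Hsum t)) @ \oo --> l.
Proof.
have e8 : (0 : R) < 8^-1 by rewrite invr_gt0.
move=> [l /cvgr_dist_lt near_l]; have [N _ lN] := near_l _ e8.
have [t1 kt1 w1] := @wave_Hsum_near_parity (N + 16).*2 ltac:(lia).
have [t2 kt2 w2] := @wave_Hsum_near_parity (N + 16).*2.+1 ltac:(lia).
have l1 : `|l - wave (Hsum t1)| < 8^-1 by apply: lN => /=; lia.
have l2 : `|l - wave (Hsum t2)| < 8^-1 by apply: lN => /=; lia.
move: w1 w2 l1 l2; rewrite odd_double oddS odd_double /= !ltr_norml !ler_norml.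
by move=> /andP[a1 a2] /andP[b1 b2] /andP[c1 c2] /andP[d1 d2]; lra.
Qed.

End oscillation.

Section jump_example.
Variable R : realType.

Definition jump_F : set (fn unit unit) := setT.
Definition jump_T (th : param_space R) : set (fn unit unit) := setT.
Definition jump_SEL (D : seq (datum unit unit)) : param_space R :=
  mkparam (if D is [::] then 0 else 1) None.

Lemma jump_consistent (f : fn unit unit) D : consistent f D.
Proof. by elim: D => [|[? [] ? ?] D IH]; constructor => //; case: (f _ _ _). Qed.

Lemma jump_Pset D : Pset jump_T D = setT.
Proof.
apply/seteqP; split => // th _; apply: subset_closure.
by exists (fun _ _ _ => tt) => //; apply: jump_consistent.
Qed.

Lemma jump_compact_param : compact_param jump_F jump_T.
Proof. by split=> [|f _]; [exact: param_space_compact | exists (mkparam 0 None)]. Qed.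

Lemma jump_selection : is_selection jump_T jump_SEL.
Proof. by move=> D _; rewrite jump_Pset. Qed.

Lemma jump_propA : propA jump_F jump_T jump_SEL.
Proof.
move=> d _; exists (jump_SEL (mkseq d 1)); apply: cvg_near_cst.
by exists 1%N => // -[|t] //= _; rewrite /theta /jump_SEL /=.
Qed.

Lemma jump_not_propD : ~ propD jump_F jump_T jump_SEL.
Proof.
move=> [g [Tw [_ [Tw0 Dg]]]]; pose d (_ : nat) := Datum 0 tt tt tt.
have ad : admissible jump_F d by exists (fun _ _ _ => tt) => // t; apply: jump_consistent.
have := Dg d ad 0%N 1%N isT Tw0; rewrite /competitive_ineq big_nat1 !jump_Pset.
rewrite (_ : hdist _ _ = 0); last first.
  by apply/eqP; rewrite eq_le hdist_ge0 hdist_le // => *; rewrite dist_to_set_eq0.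
rewrite mulr0 /theta /jump_SEL /= param_mdistE /param_dist /= /onat_dist eqxx.
by rewrite !clamp01_id ?ler01 ?lexx // subr0 normr1 addr0 ler10.
Qed.

End jump_example.

Section oscillation_example.
Variable R : realType.
Local Notation param_space := (param_space R).

Definition osc_fn (h : option nat) : fn nat unit :=
  fun t _ _ => if h is Some n then nat_of_bool (t == n) else 0%N.
Definition osc_F : set (fn nat unit) := [set osc_fn None].
Definition osc_T (th : param_space) : set (fn nat unit) := [set osc_fn (sval th).2].

Definition osc_weight (D : seq (datum nat unit)) : R :=
  \sum_(n <- undup (map (@d_t _ _) D)) onat_weight R (Some n).
Definition osc_point D : param_space := mkparam (wave (osc_weight D)) None.
(* The fallback branch is only taken on data that no system of [osc_F]
   explains. *)
Definition osc_SEL D : param_space :=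
  if pselect (Pset osc_T D (osc_point D)) then osc_point D
  else xget (osc_point D) (Pset osc_T D).

Lemma osc_compact_param : compact_param osc_F osc_T.
Proof. by split=> [|f ->]; [exact: param_space_compact | exists (mkparam 0 None)]. Qed.

Lemma osc_selection : is_selection osc_T osc_SEL.
Proof.
move=> D PD; rewrite /osc_SEL; case: pselect => // nPD; exact: xgetPex.
Qed.

Section admissible_stream.
Variables (d : nat -> datum nat unit) (ad : admissible osc_F d).

Lemma osc_admissible_out i : d_xp (d i) = 0%N.
Proof. by have [f Ff fd] := ad; rewrite ((consistent_mkseqP _ _ i.+1).1 (fd _)) // Ff. Qed.

Lemma osc_point_Pset t : Pset osc_T (mkseq d t) (osc_point (mkseq d t)).
Proof.
apply: subset_closure; exists (osc_fn None) => //.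
by apply/consistent_mkseqP => i _; rewrite osc_admissible_out.
Qed.

Lemma osc_theta t : theta osc_SEL d t = osc_point (mkseq d t).
Proof.
rewrite /theta /osc_SEL; case: pselect => // nP.
by case: (nP (@osc_point_Pset t)).
Qed.

End admissible_stream.

Lemma osc_weight_rcons D x : osc_weight (rcons D x) =
  osc_weight D + (if d_t x \in map (@d_t _ _) D then 0 else onat_weight R (Some (d_t x))).
Proof.
rewrite /osc_weight map_rcons; case: ifP => xD.
  rewrite addr0; apply: perm_big; apply: uniq_perm; rewrite ?undup_uniq // => y.
  by rewrite !mem_undup mem_rcons in_cons; case: eqP => // ->.
rewrite undup_rcons big_rcons /=; congr (_ + _); congr (\sum_(_ <- _) _).
by apply/all_filterP/allP => y; rewrite mem_undup; apply: contraTneq => ->; rewrite xD.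
Qed.

Lemma osc_point_rcons_mdist D x : mdist (osc_point (rcons D x)) (osc_point D) <=
  pi / 2 * (if d_t x \in map (@d_t _ _) D then 0 else onat_weight R (Some (d_t x))).
Proof.
rewrite param_mdistE /param_dist /= /onat_dist eqxx addr0 !clamp01_id ?wave_itv //.
apply: le_trans (wave_lipschitz _ _) _; rewrite osc_weight_rcons addrC addKr.
by case: ifP; rewrite ?normr0 ?mulr0 // ger0_norm ?onat_weight_ge0.
Qed.

Lemma osc_new_time_hdist (d : nat -> datum nat unit) t : admissible osc_F d ->
  d_t (d t) \notin map (@d_t _ _) (mkseq d t) ->
  onat_weight R (Some (d_t (d t))) <=
    hdist (Pset osc_T (mkseq d t.+1)) (Pset osc_T (mkseq d t)).
Proof.
move=> ad newt; set n := d_t (d t).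
have [M _ diamM] := compact_mdist_bounded (mkparam 0 None) (@param_space_compact R).
apply: (le_hdist diamM (y := mkparam 0 (Some n))).
  apply: subset_closure; exists (osc_fn (Some n)) => //.
  apply/consistent_mkseqP => i it; rewrite osc_admissible_out //=.
  case: eqP => // tin; move: newt; rewrite -/n -tin /mkseq -map_comp.
  by rewrite (map_f (@d_t _ _ \o d)) // mem_iota.
apply: dist_to_set_ge; first by exists (osc_point (mkseq d t.+1)); apply: osc_point_Pset.
apply: closure_mdist_ge => th [f -> /consistent_mkseqP /(_ t (ltnSn t))].
rewrite osc_admissible_out // param_mdistE /param_dist /=.
move=> th_n; apply: ler_wpDl; first exact: normr_ge0.
rewrite /onat_dist; case: eqP => [th_eq|_]; last by rewrite le_max lexx.
by move: th_n; rewrite -th_eq /osc_fn eqxx.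
Qed.

Lemma osc_propD : propD osc_F osc_T osc_SEL.
Proof.
have pi2_ge0 : 0 <= pi / 2 :> R by rewrite divr_ge0 // pi_ge0.
exists (pi / 2), 1%N; do 2!split=> //; move=> d ad t1 t2 t12 t21.
have -> : t2 = t1.+1 by lia.
rewrite /competitive_ineq big_nat1 !osc_theta // mkseqS.
apply: le_trans (osc_point_rcons_mdist _ _) _; case: ifPn => newt.
  by rewrite mulr0 mulr_ge0 ?hdist_ge0.
by rewrite ler_wpM2l // -mkseqS osc_new_time_hdist.
Qed.

Lemma osc_not_propA : ~ propA osc_F osc_T osc_SEL.
Proof.
pose d t : datum nat unit := Datum t 0%N 0%N tt.
have ad : admissible osc_F d by exists (osc_fn None) => // t; apply/consistent_mkseqP.
move=> /(_ d ad) [l /cvg_param_fst theta_l]; apply: (@wave_Hsum_not_cvg R).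
exists (sval l).1.
suff <- : (fun t => (sval (theta osc_SEL d t)).1) = (fun t => wave (Hsum R t)) by [].
apply: funext => t.
rewrite osc_theta //= clamp01_id ?wave_itv //; congr wave.
rewrite /osc_weight /mkseq -map_comp (@eq_map _ _ _ id) // map_id undup_id ?iota_uniq //.
by rewrite /Hsum /series /= /index_iota subn0.
Qed.

End oscillation_example.

Definition implies_on_compact (R : realType)
  (Px Py : forall (X U : Type) (K : metricType R),
     set (fn X U) -> (K -> set (fn X U)) -> (seq (datum X U) -> K) -> Prop) : Prop :=
  forall X U (K : metricType R) (F : set (fn X U)) (T : K -> set (fn X U)) SEL,
    compact_param F T -> Px X U K F T SEL -> Py X U K F T SEL.

Lemma not_implies_weaken (R : realType) Px Px' Py Py' :
  implies_on_compact Px Px' -> implies_on_compact Py' Py ->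
  @not_implies R Px Py -> not_implies Px' Py'.
Proof.
move=> xx' yy' [X [U [K [F [T [SEL [cp [sel [Px_ nPy]]]]]]]]].
exists X, U, K, F, T, SEL; do 3!split=> //; first exact: xx'.
by move/(yy' _ _ _ _ _ _ cp).
Qed.

Lemma jump_not_implies (R : realType) : not_implies (@propA R) (@propD R).
Proof.
exists unit, unit, (param_space R), jump_F, (@jump_T R), (@jump_SEL R).
split; [exact: jump_compact_param | split; [exact: jump_selection | split]].
  exact: jump_propA.
exact: jump_not_propD.
Qed.

Lemma osc_not_implies (R : realType) : not_implies (@propD R) (@propA R).
Proof.
exists nat, unit, (param_space R), osc_F, (@osc_T R), (@osc_SEL R).
split; [exact: osc_compact_param | split; [exact: osc_selection | split]].
  exact: osc_propD.
exact: osc_not_propA.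
Qed.

Theorem corollary1 (R : realType) :
  (forall (X U : Type) (K : metricType R) (F : set (fn X U)) (T : K -> set (fn X U))
          (SEL : seq (datum X U) -> K),
     compact_param F T -> is_selection T SEL ->
     [/\ propC F T SEL -> propA F T SEL,
         propC F T SEL -> propD F T SEL,
         propA F T SEL -> propB F T SEL &
         propD F T SEL -> propB F T SEL]) /\
  (not_implies (@propA R) (@propC R) /\
   not_implies (@propA R) (@propD R) /\
   not_implies (@propB R) (@propA R) /\
   not_implies (@propB R) (@propC R) /\
   not_implies (@propB R) (@propD R) /\
   not_implies (@propD R) (@propA R) /\
   not_implies (@propD R) (@propC R)).
Proof.
have CA : implies_on_compact (@propC R) (@propA R) by move=> *; exact: propC_propA.
have CD : implies_on_compact (@propC R) (@propD R) by move=> *; exact: propC_propD.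
have AB : implies_on_compact (@propA R) (@propB R) by move=> *; exact: propA_propB.
have DB : implies_on_compact (@propD R) (@propB R) by move=> *; exact: propD_propB.
have refl P : @implies_on_compact R P P by [].
have AnotD := jump_not_implies R; have DnotA := osc_not_implies R.
split; first by move=> X U K F T SEL cp _; split; [exact: CA|exact: CD|exact: AB|exact: DB].
split; first exact: not_implies_weaken (refl _) CD AnotD.
split; first exact: AnotD.
split; first exact: not_implies_weaken DB (refl _) DnotA.
split; first exact: not_implies_weaken AB CD AnotD.
split; first exact: not_implies_weaken AB (refl _) AnotD.
split; first exact: DnotA.
exact: not_implies_weaken (refl _) CA DnotA.
Qed.
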